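(* Let $\beta\in(3/2,\beta^*]$. Suppose $\omega,\omega'\in\Omega$ satisfy $\omega\prec\omega'$. Then for every $\vec z\in S_\beta$, $$(d_1(\omega,\vec z),d_2(\omega,\vec z),\ldots)\preceq(d_1(\omega',\vec z),d_2(\omega',\vec z),\ldots).$$
   Context: $\beta^*\approx1.5437$ is the real root of $x^3-2x^2+2x=2$. $\vec q_0=(0,0)$, $\vec q_1=(1,0)$, $\vec q_2=(0,1)$, $f_i(\vec z)=(\vec z+\vec q_i)/\beta$, $S_\beta$ the attractor of this IFS. $H=\{(x,y):x<\frac1\beta,\ y<\frac1\beta,\ x+y>\frac{1}{\beta(\beta-1)}\}$; $\tilde E_0=([0,\frac1\beta)\times[0,\frac1\beta))\setminus H$; $\tilde E_1=\{0\le y<\frac1\beta,\ \frac{1}{\beta(\beta-1)}<x+y\le\frac1{\beta-1}\}\setminus H$; $\tilde E_2=\{0\le x<\frac1\beta,\ \frac{1}{\beta(\beta-1)}<x+y\le\frac1{\beta-1}\}\setminus H$; $\tilde C_{01}=\{x\ge\frac1\beta,\ y\ge0,\ x+y\le\frac{1}{\beta(\beta-1)}\}$; $\tilde C_{12}=\{x\ge\frac1\beta,\ y\ge\frac1\beta,\ x+y\le\frac1{\beta-1}\}$; $\tilde C_{02}=\{x\ge0,\ y\ge\frac1\beta,\ x+y\le\frac{1}{\beta(\beta-1)}\}$. For $\{i,j,k\}=\{0,1,2\}$, $E_i=\bigl(\tilde E_i\cup\bigcup_{n\ge1}f_jf_i^n(H)\cup\bigcup_{n\ge1}f_kf_i^n(H)\bigr)\setminus\bigcup_{n\ge0}f_i^n(H)$;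 for $ij\in\{01,12,02\}$, $C_{ij}=\tilde C_{ij}\setminus\bigl(\bigcup_{n\ge1}f_if_j^n(H)\cup\bigcup_{n\ge1}f_jf_i^n(H)\bigr)$. $\Omega=\{0,1\}^{\mathbb N}$ with left shift $\sigma$. $K_\beta:\Omega\times S_\beta\to\Omega\times S_\beta$: $K_\beta(\omega,\vec z)=(\omega,\beta\vec z-\vec q_i)$ if $\vec z\in E_i$; $(\sigma\omega,\beta\vec z-\vec q_i)$ if $\omega_1=0$, $\vec z\in C_{ij}$; $(\sigma\omega,\beta\vec z-\vec q_j)$ if $\omega_1=1$, $\vec z\in C_{ij}$. The digit $d_1(\omega,\vec z)$ is the vector subtracted, and $d_n=d_1\circ K_\beta^{n-1}$. $\prec,\preceq$ denote lexicographic order on $\Omega$ and on $\{\vec q_0,\vec q_1,\vec q_2\}^{\mathbb N}$ (with $\vec q_0<\vec q_1<\vec q_2$). *)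

From HB Require Import structures.
From mathcomp Require Import all_boot all_order all_algebra.
From mathcomp Require Import all_classical all_reals all_analysis.
Set Implicit Arguments. Unset Strict Implicit. Unset Printing Implicit Defensive.
Import Order.TTheory GRing.Theory Num.Theory.
Import numFieldTopology.Exports numFieldNormedType.Exports.
Local Open Scope ring_scope.
Local Open Scope classical_set_scope.

Section Defs.
Variable R : realType.

Definition qv (i : nat) : R * R :=
  if i == 1%N then (1, 0) else if i == 2%N then (0, 1) else (0, 0).

Definition fmap (b : R) (i : nat) (z : R * R) : R * R :=
  ((z.1 + (qv i).1) / b, (z.2 + (qv i).2) / b).

Definition is_attractor (b : R) (S : set (R * R)) : Prop :=
  compact S /\ S !=set0 /\
  S = (fmap b 0 @` S) `|` (fmap b 1 @` S) `|` (fmap b 2 @` S).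

Definition inH (b : R) (z : R * R) : Prop :=
  z.1 < b^-1 /\ z.2 < b^-1 /\ (b * (b - 1))^-1 < z.1 + z.2.

Definition in_fiH (b : R) (i n : nat) (z : R * R) : Prop :=
  exists w, inH b w /\ z = iter n (fmap b i) w.

Definition in_fjfiH (b : R) (j i n : nat) (z : R * R) : Prop :=
  exists w, inH b w /\ z = fmap b j (iter n (fmap b i) w).

Definition Et (b : R) (i : nat) (z : R * R) : Prop :=
  let a := (b * (b - 1))^-1 in
  let c := (b - 1)^-1 in
  ~ inH b z /\
  if i == 0%N then
    (0 <= z.1 /\ z.1 < b^-1 /\ 0 <= z.2 /\ z.2 < b^-1)
  else if i == 1%N then
    (0 <= z.2 /\ z.2 < b^-1 /\ a < z.1 + z.2 /\ z.1 + z.2 <= c)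
  else
    (0 <= z.1 /\ z.1 < b^-1 /\ a < z.1 + z.2 /\ z.1 + z.2 <= c).

(* E_i, where {i,j,k} = {0,1,2} *)
Definition Eset (b : R) (i j k : nat) (z : R * R) : Prop :=
  (Et b i z \/ (exists n, (0 < n)%N /\ in_fjfiH b j i n z)
            \/ (exists n, (0 < n)%N /\ in_fjfiH b k i n z))
  /\ ~ (exists n, in_fiH b i n z).

(* tilde C_ij for ij in {01, 12, 02} *)
Definition Ct (b : R) (i j : nat) (z : R * R) : Prop :=
  let a := (b * (b - 1))^-1 in
  let c := (b - 1)^-1 in
  if (i == 0%N) && (j == 1%N) then
    (b^-1 <= z.1 /\ 0 <= z.2 /\ z.1 + z.2 <= a)
  else if (i == 1%N) && (j == 2%N) then
    (b^-1 <= z.1 /\ b^-1 <= z.2 /\ z.1 + z.2 <= c)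
  else
    (0 <= z.1 /\ b^-1 <= z.2 /\ z.1 + z.2 <= a).

Definition Cset (b : R) (i j : nat) (z : R * R) : Prop :=
  Ct b i j z /\ ~ (exists n, (0 < n)%N /\ in_fjfiH b i j n z)
             /\ ~ (exists n, (0 < n)%N /\ in_fjfiH b j i n z).

(* Omega = {0,1}^N, coded as nat -> bool (false = 0, true = 1; omega_1 = w 0) *)
Definition shift (w : nat -> bool) : nat -> bool := fun n => w n.+1.

(* one step of K_beta: new omega and the index of the digit subtracted *)
Definition Kdig (b : R) (w : nat -> bool) (z : R * R) : (nat -> bool) * nat :=
  if `[< Eset b 0 1 2 z >] then (w, 0%N)
  else if `[< Eset b 1 0 2 z >] then (w, 1%N)
  else if `[< Eset b 2 0 1 z >] then (w, 2%N)
  else if `[< Cset b 0 1 z >] then (shift w, if w 0%N then 1%N else 0%N)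
  else if `[< Cset b 1 2 z >] then (shift w, if w 0%N then 2%N else 1%N)
  else if `[< Cset b 0 2 z >] then (shift w, if w 0%N then 2%N else 0%N)
  else (w, 0%N). (* unreachable on S_beta, where the E_i, C_ij partition *)

Definition Kb (b : R) (p : (nat -> bool) * (R * R)) : (nat -> bool) * (R * R) :=
  let d := Kdig b p.1 p.2 in
  (d.1, (b * p.2.1 - (qv d.2).1, b * p.2.2 - (qv d.2).2)).

(* d_{n+1}(w, z) = index of the digit subtracted at the (n+1)-th step *)
Definition digits (b : R) (w : nat -> bool) (z : R * R) (n : nat) : nat :=
  let p := iter n (Kb b) (w, z) in (Kdig b p.1 p.2).2.

End Defs.

Definition lexlt_bool (w w' : nat -> bool) : Prop :=
  exists n, (forall k, (k < n)%N -> w k = w' k) /\ w n = false /\ w' n = true.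

Definition lexlt_nat (u v : nat -> nat) : Prop :=
  exists n, (forall k, (k < n)%N -> u k = v k) /\ (u n < v n)%N.

Definition lexle_nat (u v : nat -> nat) : Prop :=
  (forall k, u k = v k) \/ lexlt_nat u v.

From Pilot Require Import Defs.
From HB Require Import structures.
From mathcomp Require Import all_boot all_order all_algebra.
From mathcomp Require Import all_classical all_reals all_analysis.

Set Implicit Arguments.
Unset Strict Implicit.
Unset Printing Implicit Defensive.
Import Order.TTheory GRing.Theory Num.Theory.
Local Open Scope ring_scope.

(* Each step of K_beta either ignores omega, or consumes omega_1 and subtracts
   q_i when omega_1 = 0 and q_j when omega_1 = 1, for some i < j; in both cases
   the new point depends on omega only through the digit.  Hence two runs from
   the same z stay in lockstep, with omega and omega' advancing together, until
   the first step that reads the position where omega and omega' first differ;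
   there omega reads 0 and omega' reads 1, so the first differing digit is
   smaller for omega.  Neither the range of beta nor z in S_beta is needed: the
   fallback branch of K_beta off the partition also ignores omega. *)

Lemma lexle_nat_first_diff (s t : nat -> nat) :
  (forall k, (forall j, (j < k)%N -> s j = t j) -> s k <> t k -> (s k < t k)%N) ->
  lexle_nat s t.
Proof.
move=> first_diff_lt.
have [some_ne|all_eq] := pselect (exists k, s k != t k); last first.
  by left=> k; apply/eqP/negPn/negP=> ne_k; apply: all_eq; exists k.
right; case: (ex_minnP some_ne) => m ne_m min_m.
have eq_below j : (j < m)%N -> s j = t j.
  by move=> ltjm; apply/eqP; apply: contraTT ltjm => /min_m; rewrite leqNgt.
by exists m; split=> //; apply: first_diff_lt => //; apply/eqP.
Qed.

Lemma lexlt_bool_head (u u' : nat -> bool) : lexlt_bool u u' ->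
  (u 0%N = false /\ u' 0%N = true) \/
  (u 0%N = u' 0%N /\ lexlt_bool (Defs.shift u) (Defs.shift u')).
Proof.
case=> [[|n] [eq_below [un u'n]]]; first by left.
right; split; first exact: eq_below.
by exists n; split=> // k ltkn; apply: eq_below.
Qed.

Section SwitchedExpansion.
Variables (X : Type) (dig : (nat -> bool) -> X -> (nat -> bool) * nat).
Variable next : X -> nat -> X.

Hypothesis dig_cases : forall y : X,
  (exists d, forall u, dig u y = (u, d)) \/
  (exists i j, (i < j)%N /\
     forall u, dig u y = (Defs.shift u, if u 0%N then j else i)).

Definition expansion_step (p : (nat -> bool) * X) : (nat -> bool) * X :=
  let d := dig p.1 p.2 in (d.1, next p.2 d.2).

Definition expansion (p : (nat -> bool) * X) (k : nat) : nat :=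
  let q := iter k expansion_step p in (dig q.1 q.2).2.

Lemma expansionS p k : expansion p k.+1 = expansion (expansion_step p) k.
Proof. by rewrite /expansion iterSr. Qed.

Lemma expansion_first_diff_lt k : forall (u u' : nat -> bool) (y : X),
  lexlt_bool u u' ->
  (forall j, (j < k)%N -> expansion (u, y) j = expansion (u', y) j) ->
  expansion (u, y) k <> expansion (u', y) k ->
  (expansion (u, y) k < expansion (u', y) k)%N.
Proof.
elim: k => [|k IH] u u' y lt_uu' eq_below.
  case: (dig_cases y) => [[d dig_y]|[i [j [ltij dig_y]]]];
    rewrite /expansion /= !dig_y //=.
  by case: (lexlt_bool_head lt_uu') => [[-> ->]|[-> _]].
have eq_expansion0 := eq_below 0%N (ltn0Sn k).
rewrite !expansionS; have {}eq_below j : (j < k)%N ->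
    expansion (expansion_step (u, y)) j = expansion (expansion_step (u', y)) j.
  by move=> ltjk; rewrite -!expansionS; apply: eq_below.
case: (dig_cases y) => [[d dig_y]|[i [j [ltij dig_y]]]].
  have step_y v : expansion_step (v, y) = (v, next y d).
    by rewrite /expansion_step /= dig_y.
  by rewrite !step_y in eq_below *; apply: IH.
have step_y v : expansion_step (v, y) =
    (Defs.shift v, next y (if v 0%N then j else i)).
  by rewrite /expansion_step /= dig_y.
have eq_digit0 : (if u 0%N then j else i) = (if u' 0%N then j else i).
  by move: eq_expansion0; rewrite /expansion /= !dig_y.
case: (lexlt_bool_head lt_uu') => [[u0 u'0]|[eq_head lt_shift]].
  by move: eq_digit0 ltij; rewrite u0 u'0 => ->; rewrite ltnn.
by rewrite !step_y eq_head in eq_below *; apply: IH.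
Qed.

Lemma expansion_lex_monotone (u u' : nat -> bool) (y : X) :
  lexlt_bool u u' -> lexle_nat (expansion (u, y)) (expansion (u', y)).
Proof.
by move=> lt_uu'; apply: lexle_nat_first_diff => k; apply: expansion_first_diff_lt.
Qed.

End SwitchedExpansion.

Lemma Kdig_cases (R : realType) (b : R) (y : R * R) :
  (exists d, forall u, Kdig b u y = (u, d)) \/
  (exists i j, (i < j)%N /\
     forall u, Kdig b u y = (Defs.shift u, if u 0%N then j else i)).
Proof.
rewrite /Kdig.
case: `[< Eset b 0 1 2 y >]; first by left; exists 0%N.
case: `[< Eset b 1 0 2 y >]; first by left; exists 1%N.
case: `[< Eset b 2 0 1 y >]; first by left; exists 2%N.
case: `[< Cset b 0 1 y >]; first by right; exists 0%N, 1%N.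
case: `[< Cset b 1 2 y >]; first by right; exists 1%N, 2%N.
case: `[< Cset b 0 2 y >]; first by right; exists 0%N, 2%N.
by left; exists 0%N.
Qed.

Definition Kb_next (R : realType) (b : R) (y : R * R) (d : nat) : R * R :=
  (b * y.1 - (qv R d).1, b * y.2 - (qv R d).2).

Lemma Kb_expansion_step (R : realType) (b : R) :
  Kb b =1 expansion_step (Kdig b) (Kb_next b).
Proof. by move=> p; rewrite /Kb /expansion_step /Kb_next. Qed.

Lemma digits_expansion (R : realType) (b : R) w z :
  digits b w z = expansion (Kdig b) (Kb_next b) (w, z).
Proof.
by apply/funext=> k; rewrite /digits /expansion (eq_iter (Kb_expansion_step b)).
Qed.

Theorem theorem6p5 (R : realType) (b : R) (S : set (R * R)) :
  3 / 2 < b ->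
  (exists bs : R, bs ^+ 3 - 2 * bs ^+ 2 + 2 * bs = 2 /\ b <= bs) ->
  is_attractor b S ->
  forall w w' : nat -> bool, lexlt_bool w w' ->
  forall z : R * R, S z ->
  lexle_nat (digits b w z) (digits b w' z).
Proof.
move=> _ _ _ w w' lt_ww' z _; rewrite !digits_expansion.
exact: (expansion_lex_monotone (Kb_next b) (Kdig_cases b) z lt_ww').
Qed.
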